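(* There exist $n\in\mathbb{N}$, a contraction $A\in M_n$ and a diagonal matrix $\mathbf{c}=\operatorname{diag}(c_1,\dots,c_n)$ such that $$\overline{W_{\mathbf{c}}(A)}\subsetneq\bigcap\left\{\overline{W_{\mathbf{c}\oplus \mathbf{0}}(U)}: U \text{ is a unitary dilation of } A\right\},$$ i.e. the intersection of the closures of the $\mathbf{c}\oplus\mathbf{0}$-numerical ranges of all unitary dilations of $A$ contains $\overline{W_{\mathbf{c}}(A)}$ as a proper subset.
   Context: For $A\in M_n$ and $\mathbf{c}=\operatorname{diag}(c_1,\dots,c_n)$, $W_{\mathbf{c}}(A)=\{\sum_{j=1}^n c_j\langle Ae_j,e_j\rangle: \{e_j\}_{j=1}^n \text{ an orthonormal basis of } \mathbb{C}^n\}$. A unitary dilation of $A$ is a unitary operator $U$ on a Hilbert space $\mathcal{K}\supseteq\mathbb{C}^n$ with $P_{\mathbb{C}^n}U|_{\mathbb{C}^n}=A$; $\mathbf{c}\oplus\mathbf{0}$ is the diagonal operator $\operatorname{diag}(c_1,\dots,c_n,0,0,\dots)$ on $\mathcal{K}$, and $W_{\mathbf{c}\oplus\mathbf{0}}(U)=\{\sum_{j=1}^n c_j\langle Ue_j,e_j\rangle: \{e_j\}_{j=1}^n \text{ an orthonormal set in } \mathcal{K}\}$. *)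

From HB Require Import structures.
From mathcomp Require Import all_boot all_order all_algebra.
From mathcomp Require Import complex reals.
Set Implicit Arguments. Unset Strict Implicit. Unset Printing Implicit Defensive.
Import Order.TTheory GRing.Theory Num.Theory.
Local Open Scope ring_scope.

Section Defs.
Variable R : realType.
Local Notation C := R[i].

Definition is_inner (K : lmodType C) (ip : K -> K -> C) : Prop :=
  [/\ forall (a : C) (x y z : K), ip (a *: x + y) z = a * ip x z + ip y z,
      forall x y, ip x y = (ip y x)^*,
      forall x, 0 <= ip x x &
      forall x, ip x x = 0 -> x = 0].

(* completeness w.r.t. the norm ||x|| = sqrt <x,x> (stated with squared norms) *)
Definition is_complete (K : lmodType C) (ip : K -> K -> C) : Prop :=
  forall u : nat -> K,
    (forall eps : C, 0 < eps -> exists N : nat, forall m k : nat,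
        (N <= m)%N -> (N <= k)%N -> ip (u m - u k) (u m - u k) < eps) ->
    exists l : K, forall eps : C, 0 < eps -> exists N : nat, forall m : nat,
        (N <= m)%N -> ip (u m - l) (u m - l) < eps.

Definition is_hilbert (K : lmodType C) (ip : K -> K -> C) : Prop :=
  is_inner ip /\ is_complete ip.

Definition orthonormal (K : lmodType C) (ip : K -> K -> C) (n : nat)
  (f : 'I_n -> K) : Prop :=
  forall i j : 'I_n, ip (f i) (f j) = (i == j)%:R.

Definition Wc (K : lmodType C) (ip : K -> K -> C) (n : nat) (c : 'I_n -> C)
  (T : K -> K) : C -> Prop :=
  fun z => exists f : 'I_n -> K, orthonormal ip f /\
             z = \sum_(j < n) c j * ip (T (f j)) (f j).

Definition cclosure (S : C -> Prop) (z : C) : Prop :=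
  forall eps : C, 0 < eps -> exists w, S w /\ `|z - w| < eps.

Definition dotc (n : nat) (x y : 'cV[C]_n) : C :=
  \sum_(i < n) x i 0 * (y i 0)^*.

Definition contraction (n : nat) (A : 'M[C]_n) : Prop :=
  forall x : 'cV[C]_n, dotc (A *m x) (A *m x) <= dotc x x.

Definition unitary (K : lmodType C) (ip : K -> K -> C) (U : K -> K) : Prop :=
  [/\ forall (a : C) (x y : K), U (a *: x + y) = a *: U x + U y,
      forall x y, ip (U x) (U y) = ip x y &
      forall y, exists x, U x = y].

(* U on K is a unitary dilation of A, where C^n sits in K via the
   orthonormal images v of the standard basis: P_{C^n} U |_{C^n} = A *)
Definition unitary_dilation (K : lmodType C) (ip : K -> K -> C) (n : nat)
  (v : 'I_n -> K) (U : K -> K) (A : 'M[C]_n) : Prop :=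
  [/\ orthonormal ip v, unitary ip U &
      forall i j : 'I_n, ip (U (v j)) (v i) = A i j].

Definition dilation_inter (n : nat) (A : 'M[C]_n) (c : 'I_n -> C) (z : C) : Prop :=
  forall (K : lmodType C) (ip : K -> K -> C) (v : 'I_n -> K) (U : K -> K),
    is_hilbert ip -> unitary_dilation ip v U A -> cclosure (Wc ip c U) z.

Definition Wc_mx (n : nat) (A : 'M[C]_n) (c : 'I_n -> C) : C -> Prop :=
  Wc (@dotc n) c (mulmx A).

End Defs.

(* The example is the nilpotent Jordan block A = [[0,1],[0,0]] with c = diag(1,-1).
   Since |<Ax,x>| <= 1/2 for unit vectors x, W_c(A) lies in the closed unit disc.
   As C^2 sits isometrically in the dilation space and U compresses to A, W_c(A)
   is contained in W_{c(+)0}(U) for every unitary dilation U. But the entry 1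
   of A forces U e_2 = e_1, and the unit vector x = U^-1 e_2 is orthogonal to e_1
   and e_2; the orthonormal pair (x + e_1 +- sqrt 2 e_2)/2 then yields the value
   sqrt 2 in W_{c(+)0}(U), for every U. *)
From Pilot Require Import Defs.
From HB Require Import structures.
From mathcomp Require Import all_boot all_order all_algebra.
From mathcomp Require Import complex reals.
From mathcomp Require Import ring.
Import Order.TTheory GRing.Theory Num.Theory.
Set Implicit Arguments. Unset Strict Implicit. Unset Printing Implicit Defensive.
Local Open Scope ring_scope.

Lemma sqrtC2_gt1 {C : numClosedFieldType} : 1 < sqrtC (2 : C).
Proof. by rewrite -{1}sqrtC1 ltr_sqrtC ?nnegrE ?ler01 ?ler0n // ltr1n. Qed.

Section Numerical.
Variable R : realType.
Local Notation C := R[i].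

Lemma cclosure_refl (S : C -> Prop) z : S z -> cclosure S z.
Proof. by move=> Sz eps eps_gt0; exists z; rewrite subrr normr0. Qed.

Lemma cclosure_sub (S T : C -> Prop) z :
  (forall w, S w -> T w) -> cclosure S z -> cclosure T z.
Proof.
by move=> sST clSz eps /clSz[w [Sw lt_zw]]; exists w; split; first exact: sST.
Qed.

Lemma cclosure_norm_le (S : C -> Prop) (r : C) z : r \is Num.real ->
  (forall w, S w -> `|w| <= r) -> cclosure S z -> `|z| <= r.
Proof.
move=> r_real S_le clSz; rewrite real_leNgt ?normr_real //; apply/negP => lt_rz.
have [w [Sw lt_zw]] : exists w, S w /\ `|z - w| < `|z| - r.
  by apply: clSz; rewrite subr_gt0.
have le_z := ler_normD (z - w) w; rewrite subrK in le_z.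
have := le_lt_trans le_z (ltr_leD lt_zw (S_le w Sw)).
by rewrite subrK ltxx.
Qed.

End Numerical.

Section InnerProduct.
Variables (R : realType) (K : lmodType R[i]) (ip : K -> K -> R[i]).
Hypothesis ip_inner : is_inner ip.

Lemma ipDl x y z : ip (x + y) z = ip x z + ip y z.
Proof. by case: ip_inner => lin _ _ _; rewrite -[x]scale1r lin mul1r scale1r. Qed.

Lemma ip0l z : ip 0 z = 0.
Proof. by apply/(addrI (ip 0 z)); rewrite -ipDl !addr0. Qed.

Lemma ipZl a x z : ip (a *: x) z = a * ip x z.
Proof. by case: ip_inner => lin _ _ _; rewrite -[a *: x]addr0 lin ip0l addr0. Qed.

Lemma ip_conj x y : ip x y = (ip y x)^*.
Proof. by case: ip_inner. Qed.

Lemma ipDr x y z : ip z (x + y) = ip z x + ip z y.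
Proof. by rewrite !(ip_conj z) ipDl rmorphD. Qed.

Lemma ipZr a x z : ip z (a *: x) = a^* * ip z x.
Proof. by rewrite !(ip_conj z) ipZl rmorphM. Qed.

Lemma ipBl x y z : ip (x - y) z = ip x z - ip y z.
Proof. by rewrite ipDl -scaleN1r ipZl mulN1r. Qed.

Lemma ipBr x y z : ip z (x - y) = ip z x - ip z y.
Proof. by rewrite !(ip_conj z) ipBl rmorphB. Qed.

Lemma ip_suml I (r : seq I) (F : I -> K) z :
  ip (\sum_(i <- r) F i) z = \sum_(i <- r) ip (F i) z.
Proof. by elim/big_rec2: _ => [|i x s _ <-]; rewrite ?ip0l ?ipDl. Qed.

Lemma ip_sumr I (r : seq I) (F : I -> K) z :
  ip z (\sum_(i <- r) F i) = \sum_(i <- r) ip z (F i).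
Proof. by rewrite ip_conj ip_suml rmorph_sum; apply: eq_bigr => i _; rewrite [RHS]ip_conj. Qed.

Lemma unit_ip1_eq x y : ip x x = 1 -> ip y y = 1 -> ip x y = 1 -> x = y.
Proof.
move=> xx1 yy1 xy1; apply/eqP; rewrite -subr_eq0; apply/eqP.
case: ip_inner => _ _ _; apply.
by rewrite ipBl !ipBr xx1 yy1 xy1 (ip_conj y) xy1 conjC1 !subrr.
Qed.

Section Unitary.
Variable U : K -> K.
Hypothesis U_unitary : unitary ip U.

Lemma unitaryD x y : U (x + y) = U x + U y.
Proof. by case: U_unitary => lin _ _; rewrite -[x]scale1r lin !scale1r. Qed.

Lemma unitary0 : U 0 = 0.
Proof. by apply/(addrI (U 0)); rewrite -unitaryD !addr0. Qed.

Lemma unitaryZ a x : U (a *: x) = a *: U x.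
Proof. by case: U_unitary => lin _ _; rewrite -[a *: x]addr0 lin unitary0 addr0. Qed.

Lemma unitary_sum I (r : seq I) (F : I -> K) :
  U (\sum_(i <- r) F i) = \sum_(i <- r) U (F i).
Proof. by elim/big_rec2: _ => [|i x s _ <-]; rewrite ?unitary0 ?unitaryD. Qed.

Lemma unitary_ip x y : ip (U x) (U y) = ip x y.
Proof. by case: U_unitary. Qed.

End Unitary.

Section Compression.
Variables (n : nat) (v : 'I_n -> K).
Hypothesis v_on : Defs.orthonormal ip v.

Definition embed (x : 'cV[R[i]]_n) : K := \sum_i x i 0 *: v i.

Lemma ip_embed x y : ip (embed x) (embed y) = dotc x y.
Proof.
rewrite ip_suml; apply: eq_bigr => i _; rewrite ipZl ip_sumr (bigD1 i) //=.
rewrite big1 => [|j ji]; first by rewrite ipZr v_on eqxx mulr1 addr0.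
by rewrite ipZr v_on eq_sym (negPf ji) mulr0.
Qed.

Variables (A : 'M[R[i]]_n) (U : K -> K).
Hypotheses (U_unitary : unitary ip U) (UA : forall i j, ip (U (v j)) (v i) = A i j).

Lemma ip_dilation_embed x : ip (U (embed x)) (embed x) = dotc (A *m x) x.
Proof.
rewrite /dotc /embed (unitary_sum U_unitary) ip_suml.
under eq_bigr do rewrite ip_sumr.
rewrite exchange_big /=; apply: eq_bigr => i _; rewrite mxE mulr_suml.
apply: eq_bigr => j _; rewrite (unitaryZ U_unitary) ipZl ipZr UA; ring.
Qed.

Lemma Wc_mx_sub_dilation c w : Wc_mx A c w -> Wc ip c U w.
Proof.
move=> [e [e_on ->]]; exists (fun j => embed (e j)); split.
  by move=> i j; rewrite ip_embed e_on.
by apply: eq_bigr => j _; rewrite ip_dilation_embed.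
Qed.

End Compression.
End InnerProduct.

Section Jordan.
Variable R : realType.
Local Notation C := R[i].

Definition jordan2 : 'M[C]_2 := \matrix_(i, j) ((i == ord0) && (j == ord_max))%:R.

Definition c_pm (j : 'I_2) : C := if j == ord0 then 1 else -1.

Lemma sum_ord2 (V : nmodType) (F : 'I_2 -> V) : \sum_(i < 2) F i = F ord0 + F ord_max.
Proof. by rewrite big_ord_recr big_ord1; congr (F _ + F _); apply/val_inj. Qed.

Lemma ord2P (i : 'I_2) : i = ord0 \/ i = ord_max.
Proof. by case: i => [[|[|//]] ?]; [left|right]; apply/val_inj. Qed.

Lemma dotc2 (x y : 'cV[C]_2) :
  dotc x y = x ord0 0 * (y ord0 0)^* + x ord_max 0 * (y ord_max 0)^*.
Proof. exact: sum_ord2. Qed.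

Lemma dotc2_norm (x : 'cV[C]_2) : dotc x x = `|x ord0 0| ^+ 2 + `|x ord_max 0| ^+ 2.
Proof. by rewrite dotc2 !normCK. Qed.

Lemma jordan2_mul (x : 'cV[C]_2) :
  (jordan2 *m x) ord0 0 = x ord_max 0 /\ (jordan2 *m x) ord_max 0 = 0.
Proof. by rewrite !mxE !sum_ord2 !mxE /=; split; ring. Qed.

Lemma dotc_jordan2 (x : 'cV[C]_2) :
  dotc (jordan2 *m x) x = x ord_max 0 * (x ord0 0)^*.
Proof. by rewrite dotc2; have [-> ->] := jordan2_mul x; rewrite mul0r addr0. Qed.

Lemma contraction_jordan2 : contraction jordan2.
Proof.
move=> x; rewrite !dotc2_norm; have [-> ->] := jordan2_mul x.
by rewrite normr0 expr0n addr0 lerDr exprn_ge0.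
Qed.

Lemma norm_dotc_jordan2_le (x : 'cV[C]_2) :
  dotc x x = 1 -> `|dotc (jordan2 *m x) x| <= 2^-1.
Proof.
rewrite dotc_jordan2 normrM norm_conjC dotc2_norm addrC => x_unit.
have [le_mean _] := real_leif_mean_square (normr_real (x ord_max 0)) (normr_real (x ord0 0)).
by rewrite x_unit mul1r in le_mean.
Qed.

Lemma Wc_jordan2_norm_le1 w : Wc_mx jordan2 c_pm w -> `|w| <= 1.
Proof.
move=> [e [e_on ->]]; rewrite sum_ord2 /c_pm eqxx /= mul1r mulN1r.
apply: le_trans (ler_normB _ _) _.
have half_half : 2^-1 + 2^-1 = 1 :> C by field.
by rewrite -half_half lerD // norm_dotc_jordan2_le // e_on eqxx.
Qed.

End Jordan.
Arguments jordan2 {R}.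
Arguments c_pm {R}.

Section JordanDilation.
Variables (R : realType) (K : lmodType R[i]) (ip : K -> K -> R[i]).
Hypothesis ip_inner : is_inner ip.
Variables (v : 'I_2 -> K) (U : K -> K).
Hypothesis U_dil : unitary_dilation ip v U jordan2.

Let ipE := (ipDl ip_inner, ipDr ip_inner, ipZl ip_inner, ipZr ip_inner).

Lemma jordan2_dilation_shift : U (v ord_max) = v ord0.
Proof.
have [v_on U_unit UA] := U_dil.
by apply: (unit_ip1_eq ip_inner); rewrite ?(unitary_ip U_unit) ?UA ?v_on ?mxE ?eqxx.
Qed.

Lemma jordan2_dilation_preimage : exists2 x, U x = v ord_max &
  [/\ ip x x = 1, ip x (v ord0) = 0 & ip x (v ord_max) = 0].
Proof.
have [v_on U_unit UA] := U_dil; have [_ _ U_onto] := U_unit.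
have [x Ux] := U_onto (v ord_max); exists x => //.
rewrite -!(unitary_ip U_unit x) Ux jordan2_dilation_shift v_on eqxx.
by rewrite (ip_conj ip_inner) UA mxE conjC0.
Qed.

Lemma Wc_dilation_jordan2_sqrt2 : Wc ip c_pm U (sqrtC 2).
Proof.
have [v_on U_unit UA] := U_dil.
have [x0 Ux0 [x00 x0v0 x0v1]] := jordan2_dilation_preimage.
have Uv1 := jordan2_dilation_shift.
set v0 := v ord0 in Ux0 x0v0 Uv1 *; set v1 := v ord_max in Ux0 x0v1 Uv1 *.
have v00 : ip v0 v0 = 1 by rewrite v_on eqxx.
have v11 : ip v1 v1 = 1 by rewrite v_on eqxx.
have v01 : ip v0 v1 = 0 by rewrite v_on.
have v10 : ip v1 v0 = 0 by rewrite v_on.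
have Uv01 : ip (U v0) v1 = 0 by rewrite UA mxE.
have v0x0 : ip v0 x0 = 0 by rewrite (ip_conj ip_inner) x0v0 conjC0.
have v1x0 : ip v1 x0 = 0 by rewrite (ip_conj ip_inner) x0v1 conjC0.
set s := sqrtC (2 : R[i]).
have ss : s * s = 2 by rewrite -expr2 sqrtCK.
have s_real : s \is Num.real by rewrite ger0_real // sqrtC_ge0 ler0n.
have cs_conj j : (c_pm j * s)^* = c_pm j * s.
  by apply/CrealP; rewrite rpredM // /c_pm; case: (_ == _); rewrite ?rpredN rpred1.
have half_conj : (2^-1 : R[i])^* = 2^-1 by apply: geC0_conj; rewrite invr_ge0 ler0n.
pose f (j : 'I_2) := 2^-1 *: (x0 + v0 + (c_pm j * s) *: v1).
have f_on : forall i j, ip (f i) (f j) = (i == j)%:R.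
  move=> i j; rewrite /f !ipE cs_conj half_conj v00 v11 v01 v10 x00 x0v0 x0v1 v0x0 v1x0.
  by case: (ord2P i) => ->; case: (ord2P j) => ->; rewrite /c_pm /=; field: ss.
exists f; split => //.
rewrite sum_ord2 /f !(unitaryD U_unit, unitaryZ U_unit) Ux0 Uv1 !ipE !cs_conj half_conj.
by rewrite v00 v11 v01 v10 v1x0 v0x0 Uv01 /c_pm /=; field.
Qed.

End JordanDilation.

Theorem theorem1p4 (R : realType) :
  exists (n : nat) (A : 'M[R[i]]_n) (c : 'I_n -> R[i]),
    contraction A /\
    (forall z, cclosure (Wc_mx A c) z -> dilation_inter A c z) /\
    (exists z, dilation_inter A c z /\ ~ cclosure (Wc_mx A c) z).
Proof.
exists 2, jordan2, c_pm; split; first exact: contraction_jordan2.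
split.
  move=> z clWz K ip v U [ip_inner _] [v_on U_unitary UA].
  by apply: cclosure_sub clWz => w /(Wc_mx_sub_dilation ip_inner v_on U_unitary UA).
exists (sqrtC 2); split.
  move=> K ip v U [ip_inner _] U_dil.
  exact/cclosure_refl/(Wc_dilation_jordan2_sqrt2 ip_inner U_dil).
move=> clW; have := cclosure_norm_le (rpred1 _) (@Wc_jordan2_norm_le1 R) clW.
by rewrite ger0_norm ?sqrtC_ge0 ?ler0n // => /(lt_le_trans sqrtC2_gt1); rewrite ltxx.
Qed.
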